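(* Let $k$ be a positive integer and let $T$ be a 1-optimal out-branching of a digraph $D$ with $|\mathrm{Leaf}(T)|\leq k-1$. If $|\mathrm{Head}(\mathrm{Back}_D^T(z))|\leq 3k-1$ for every vertex $z\in V(D)$, then a tree decomposition $(X,T)$ of $D$ (using $T$, as an undirected tree, as the decomposition tree) of width at most $6k-5$ can be constructed.
   Context: An out-tree is a subgraph that is a tree (ignoring directions) with one vertex (the root) of in-degree $0$ and all others of in-degree $1$; an out-branching is a spanning out-tree. $\mathrm{Leaf}(T)$ is the set of vertices of out-degree $0$ in $T$. Write $u\preceq_T v$ if $v$ is reachable from $u$ in $T$, $u\prec_T v$ if also $u\ne v$. $\mathrm{Back}_{D}^T(z)=\{(a,b)\in A(D): b\prec_T z\preceq_T a\}$, and $\mathrm{Head}(B)$ is the set of heads of arcs of $B$. $T$ is 1-optimal if no replacement of the arc of $T$ entering a non-root vertex $b$ by another arc $(a,b)\in A(D)$ yields an out-branching with more leaves. A tree decomposition of a digraph is a tree with bags of vertices covering all vertices, such that every arc has both endpoints in some bag and the bags containing any given vertex form a subtree; its width is the maximum bag size minus one. *)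

From mathcomp Require Import all_boot.
Set Implicit Arguments.
Unset Strict Implicit.
Unset Printing Implicit Defensive.

Section Digraphs.
Variable V : finType.

(* T is an out-branching of D with root r: T is a sub-digraph of D (same
   vertex set), r has in-degree 0 in T, every other vertex has in-degree
   exactly 1 in T, and every vertex is reachable from r in T (so T, with
   |V|-1 arcs and connected, is a spanning tree when directions are ignored). *)
Definition out_branching_root (D T : rel V) (r : V) : Prop :=
  [/\ forall a b, T a b -> D a b,
      forall a, ~~ T a r,
      forall v, v != r -> #|[set a | T a v]| = 1
    & forall v, connect T r v].

Definition out_branching (D T : rel V) : Prop :=
  exists r, out_branching_root D T r.

Definition is_root (T : rel V) (r : V) : bool := [forall a, ~~ T a r].

Definition Leaf (T : rel V) : {set V} := [set v | [forall w, ~~ T v w]].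

Definition preceq (T : rel V) (u v : V) : bool := connect T u v.
Definition prec (T : rel V) (u v : V) : bool := connect T u v && (u != v).

Definition HeadBack (D T : rel V) (z : V) : {set V} :=
  [set b | [exists a, [&& D a b, prec T b z & preceq T z a]]].

Definition replace_arc (T : rel V) (a b : V) : rel V :=
  fun x y => (T x y && (y != b)) || ((x == a) && (y == b)).

Definition one_optimal (D T : rel V) : Prop :=
  forall a b, D a b -> ~~ is_root T b ->
    out_branching D (replace_arc T a b) ->
    #|Leaf (replace_arc T a b)| <= #|Leaf T|.

Definition undirected (T : rel V) : rel V := fun x y => T x y || T y x.

Definition tree_decomposition (D T : rel V) (X : V -> {set V}) : Prop :=
  [/\ forall v, exists t, v \in X t,
      forall a b, D a b -> exists t, (a \in X t) && (b \in X t)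
    & forall v s t, v \in X s -> v \in X t ->
        connect [rel x y | [&& v \in X x, v \in X y & undirected T x y]] s t].

Definition td_width (X : V -> {set V}) : nat := (\max_(t : V) #|X t|).-1.

End Digraphs.

From mathcomp Require Import all_boot.
From mathcomp Require Import zify.

(* Take as bag of a node t the vertex t, its parent, Head(Back(t)), and two
   global sets: Leaf(T) and the set F of children of vertices of out-degree at
   least 2.  Counting arcs gives |Leaf(T)| = 1 + sum_v (d+(v) - 1), hence
   |F| <= 2(|Leaf(T)| - 1), and each bag has at most 6k-4 vertices.  An arc
   (a,b) with b an ancestor of a lies in the bag of a; otherwise, if (a,b) is
   not a tree arc and a is not a leaf, 1-optimality forces b into F.  Finally
   the nodes whose bag contains v form a subtree: either v is global, or they
   are v, its children, and the nodes of T-paths from v to the t with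
   v in Head(Back(t)), all of which have v in Head(Back) too. *)

Set Implicit Arguments.
Unset Strict Implicit.
Unset Printing Implicit Defensive.

Section OutDegrees.
Variable V : finType.
Implicit Types (T : rel V) (P : pred V).

Definition outdeg T v := #|[set w | T v w]|.
Definition indeg T v := #|[set a | T a v]|.

Lemma card_set_sum P : #|[set w | P w]| = \sum_w P w.
Proof. by rewrite -sum1dep_card big_mkcond; apply: eq_bigr => w _; case: (P w). Qed.

Lemma sum_outdeg_indeg T : \sum_v outdeg T v = \sum_v indeg T v.
Proof.
rewrite /outdeg /indeg; under eq_bigr do rewrite card_set_sum.
by rewrite exchange_big; apply: eq_bigr => w _; rewrite card_set_sum.
Qed.

Lemma Leaf_outdeg T v : (v \in Leaf T) = (outdeg T v == 0).
Proof.
rewrite inE /outdeg cards_eq0; apply/forallP/eqP => [leaf_v | /setP out0 w].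
  by apply/setP => w; rewrite !inE; apply/negbTE/leaf_v.
by have := out0 w; rewrite !inE => ->.
Qed.

Lemma card_Leaf_sum T :
  #|Leaf T| + \sum_v outdeg T v = #|V| + \sum_v (outdeg T v).-1.
Proof.
have -> : #|Leaf T| = \sum_v (outdeg T v == 0).
  by rewrite -card_set_sum; apply: eq_card => v; rewrite Leaf_outdeg inE.
rewrite -sum1_card -!big_split; apply: eq_bigr => v _.
by case: (outdeg T v).
Qed.

Definition branch_children T := [set b | [exists p, T p b && (1 < outdeg T p)]].

Lemma card_branch_children T :
  #|branch_children T| <= 2 * \sum_v (outdeg T v).-1.
Proof.
apply: (@leq_trans (\sum_p ((1 < outdeg T p) * outdeg T p))).
  have -> : \sum_p ((1 < outdeg T p) * outdeg T p) =
            \sum_p \sum_b (T p b && (1 < outdeg T p)).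
    apply: eq_bigr => p _; case: (1 < outdeg T p) => /=.
      by rewrite mul1n /outdeg card_set_sum; apply: eq_bigr => b _; rewrite andbT.
    by rewrite mul0n big1 // => b _; rewrite andbF.
  rewrite exchange_big card_set_sum; apply: leq_sum => b _.
  case: existsP => [[p p_b]|_] //.
  by rewrite (bigD1 p) //= p_b leq_addr.
rewrite big_distrr; apply: leq_sum => p _; case: (outdeg T p) => [|[|n]] //=; lia.
Qed.

End OutDegrees.

Section ReplaceArc.
Variables (V : finType) (T : rel V) (a b r : V).
Local Notation T' := (replace_arc T a b).

Lemma connect_replace_arc_or x v :
  connect T x v -> connect T' r x \/ connect T b x ->
  connect T' r v \/ connect T b v.
Proof.
case/connectP=> p; elim: p x => [|y p IH] x /=; first by move=> _ ->.
case/andP=> Txy y_p v_last x_reached; apply: IH y_p v_last _.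
case: (eqVneq y b) => [->|yb]; first by right; apply: connect0.
case: x_reached => [r_x|b_x]; last by right; apply: connect_trans b_x (connect1 Txy).
by left; apply: connect_trans r_x (connect1 _); rewrite /replace_arc Txy yb.
Qed.

Lemma connect_replace_arc x v :
  connect T' r b -> connect T' r x -> connect T x v -> connect T' r v.
Proof.
move=> r_b + /connectP [p]; elim: p x => [|y p IH] x /=; first by move=> ? _ ->.
move=> r_x /andP [Txy y_p] v_last; apply: IH y_p v_last.
case: (eqVneq y b) => [->|yb] //.
by apply: connect_trans r_x (connect1 _); rewrite /replace_arc Txy yb.
Qed.

Lemma Leaf_sub_replace_arc : a \notin Leaf T -> Leaf T \subset Leaf T'.
Proof.
move=> a_inner; apply/subsetP => v; rewrite !inE => /forallP leaf_v.
apply/forallP => w; rewrite /replace_arc negb_or negb_and (negbTE (leaf_v w)) /=.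
case: (eqVneq v a) => [va|//]; case/negP: a_inner; rewrite -va inE.
exact/forallP.
Qed.

Lemma Leaf_replace_arc_sole_parent p :
  p != a -> (forall w, T p w -> w = b) -> p \in Leaf T'.
Proof.
move=> pa sole; rewrite inE; apply/forallP => w.
rewrite /replace_arc negb_or (negbTE pa) /=.
by case Tpw: (T p w) => //=; rewrite (sole w Tpw) eqxx.
Qed.

End ReplaceArc.

Lemma path_connect_last (V : finType) (e : rel V) x p y :
  path e x p -> y \in x :: p -> connect e y (last x p).
Proof.
move=> e_p y_in; case/splitPl: y_in e_p => p1 p2 y_last.
rewrite cat_path last_cat y_last.
by case/andP=> _ e_p2; apply/connectP; exists p2.
Qed.

Lemma HeadBack_along (V : finType) (D T : rel V) v y t :
  v \in HeadBack D T t -> connect T v y -> connect T y t -> v != y ->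
  v \in HeadBack D T y.
Proof.
rewrite !inE => /existsP [a /and3P [Dav _ t_a]] v_y y_t vy.
apply/existsP; exists a.
by rewrite Dav /prec /preceq v_y vy (connect_trans y_t t_a).
Qed.

Definition bag (V : finType) (D T : rel V) (t : V) : {set V} :=
  t |: [set a | T a t] :|: HeadBack D T t :|: Leaf T :|: branch_children T.

Lemma in_bag (V : finType) (D T : rel V) v t : (v \in bag D T t) =
  [|| v == t, T v t, v \in HeadBack D T t, v \in Leaf T | v \in branch_children T].
Proof. by rewrite !inE -!orbA. Qed.

Section Branching.
Variables (V : finType) (D T : rel V) (r : V).
Hypothesis Tr : out_branching_root D T r.

Lemma indeg_branching_le1 v : indeg T v <= 1.
Proof.
have [_ r_root indeg1 _] := Tr.
case: (eqVneq v r) => [->|vr]; last by rewrite /indeg indeg1.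
by rewrite /indeg card_set_sum big1 // => a _; rewrite (negbTE (r_root a)).
Qed.

Lemma sum_indeg_branching : (\sum_v indeg T v).+1 = #|V|.
Proof.
have [_ r_root indeg1 _] := Tr.
rewrite -sum1_card (bigD1 r) //= [in RHS](bigD1 r) //= /indeg.
rewrite card_set_sum big1 => [|a _]; last by rewrite (negbTE (r_root a)).
by rewrite add0n add1n; congr _.+1; apply: eq_bigr => v /indeg1.
Qed.

Lemma card_Leaf_branching : #|Leaf T| = (\sum_v (outdeg T v).-1).+1.
Proof.
have := card_Leaf_sum T; rewrite sum_outdeg_indeg -sum_indeg_branching; lia.
Qed.

Lemma card_bag z : #|bag D T z| <= #|HeadBack D T z| + 3 * #|Leaf T|.
Proof.
have U := fun A B : {set V} => (leq_card_setU A B).1.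
have := U (z |: [set a | T a z] :|: HeadBack D T z :|: Leaf T) (branch_children T).
have := U (z |: [set a | T a z] :|: HeadBack D T z) (Leaf T).
have := U (z |: [set a | T a z]) (HeadBack D T z).
have := U [set z] [set a | T a z].
have := card_branch_children T; have := card_Leaf_branching.
have := indeg_branching_le1 z; rewrite /bag /indeg cards1; lia.
Qed.

Lemma out_branching_replace_arc a b :
  D a b -> ~~ connect T b a -> out_branching_root D (replace_arc T a b) r.
Proof.
have [Tsub r_root indeg1 r_reach] := Tr.
move=> Dab b_a; have br : b != r by apply: contraNneq b_a => ->; apply: r_reach.
have r_a : connect (replace_arc T a b) r a.
  have r_r : connect (replace_arc T a b) r r \/ connect T b r by left; apply: connect0.
  by have [//|/(negP b_a)] := @connect_replace_arc_or _ T a b r r a (r_reach a) r_r.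
have r_b : connect (replace_arc T a b) r b.
  by apply: connect_trans r_a (connect1 _); rewrite /replace_arc !eqxx orbT.
split.
- by move=> x y /orP [/andP [/Tsub]|/andP [/eqP -> /eqP ->]].
- by move=> x; rewrite /replace_arc (negbTE (r_root x)) [r == b]eq_sym (negbTE br) andbF.
- move=> v vr; case: (eqVneq v b) => [->|vb].
    suff -> : [set x | replace_arc T a b x b] = [set a] by rewrite cards1.
    by apply/setP => x; rewrite !inE /replace_arc eqxx andbF andbT.
  rewrite -(indeg1 v vr); apply: eq_card => x.
  by rewrite !inE /replace_arc (negbTE vb) andbT andbF orbF.
- move=> v; exact: connect_replace_arc r_b (connect0 _ r) (r_reach v).
Qed.

(* If the parent p of b had out-degree 1, rerouting b to a non-leaf a would
   turn p into a new leaf and keep all old ones, contradicting 1-optimality. *)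
Lemma one_optimal_branch_child a b :
  one_optimal D T -> D a b -> ~~ connect T b a -> ~~ T a b -> a \notin Leaf T ->
  b \in branch_children T.
Proof.
have [_ _ indeg1 r_reach] := Tr.
move=> opt Dab b_a nTab a_inner; apply/negPn/negP => b_nbranch.
have br : b != r by apply: contraNneq b_a => ->; apply: r_reach.
have [p Tpb] : exists p, T p b.
  have /cards1P [p parent_b] := introT eqP (indeg1 b br).
  by exists p; have := set11 p; rewrite -parent_b inE.
have sole : forall w, T p w -> w = b.
  have : outdeg T p <= 1.
    move: b_nbranch; rewrite inE negb_exists => /forallP /(_ p).
    by rewrite Tpb -leqNgt.
  by move/card_le1_eqP => out1 w Tpw; apply: out1; rewrite inE.
have pa : p != a by apply: contraNneq nTab => <-.
have b_nroot : ~~ is_root T b.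
  by rewrite negb_forall; apply/existsP; exists p; rewrite Tpb.
have := opt a b Dab b_nroot (ex_intro _ r (out_branching_replace_arc Dab b_a)).
apply/negP; rewrite -ltnNge; apply: proper_card; apply/properP; split.
  exact: Leaf_sub_replace_arc.
exists p; first exact: Leaf_replace_arc_sole_parent.
by rewrite inE negb_forall; apply/existsP; exists b; rewrite Tpb.
Qed.

Lemma bag_cover_arc a b :
  one_optimal D T -> D a b -> exists t, (a \in bag D T t) && (b \in bag D T t).
Proof.
move=> opt Dab; case: (boolP (connect T b a)) => b_a.
  case: (eqVneq b a) => [<-|ba]; first by exists b; rewrite in_bag eqxx.
  exists a; rewrite !in_bag eqxx /=; apply/or3P; apply: Or33; apply/orP; left.
  by rewrite inE; apply/existsP; exists a; rewrite Dab /prec /preceq b_a ba connect0.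
case: (boolP (T a b)) => Tab; first by exists b; rewrite !in_bag Tab eqxx orbT.
case: (boolP (a \in Leaf T)) => a_leaf.
  by exists b; rewrite !in_bag a_leaf eqxx !orbT.
exists a; by rewrite !in_bag (one_optimal_branch_child opt Dab b_a Tab a_leaf) eqxx !orbT.
Qed.

Section BagsContaining.
Variable v : V.
Local Notation R := [rel x y | [&& v \in bag D T x, v \in bag D T y & undirected T x y]].

Lemma symmetric_bag_rel : symmetric R.
Proof.
move=> x y /=; rewrite /undirected orbC.
by case: (v \in bag D T x); case: (v \in bag D T y).
Qed.

Lemma connect_bag_global t :
  (v \in Leaf T) || (v \in branch_children T) -> connect R v t.
Proof.
have [_ _ _ r_reach] := Tr.
move=> v_global; have in_all t' : v \in bag D T t' by rewrite in_bag v_global !orbT.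
have r_R t' : connect R r t'.
  have /connectP [p p_path ->] := r_reach t'; apply/connectP; exists p => //.
  by apply: sub_path p_path => x y Txy; rewrite /= !in_all /undirected Txy.
by apply: connect_trans (r_R t); rewrite (sym_connect_sym symmetric_bag_rel).
Qed.

Lemma connect_bag_HeadBack t : v \in HeadBack D T t -> connect R v t.
Proof.
move=> v_back; have v_t : connect T v t.
  by move: v_back; rewrite inE => /existsP [a /and3P [_ /andP [] //]].
have /connectP [p p_path t_last] := v_t; apply/connectP; exists p => //.
apply: (sub_in_path (P := [pred y | v \in bag D T y]) _ _ p_path).
  move=> x y Px Py Txy; rewrite -!topredE /= in Px Py.
  by rewrite /= Px Py /undirected Txy.
apply/allP => y y_p; rewrite inE.
case: (eqVneq v y) => [<-|vy]; first by rewrite in_bag eqxx.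
have y_t : connect T y t by rewrite t_last; exact: path_connect_last p_path y_p.
by rewrite in_bag (HeadBack_along v_back (path_connect p_path y_p) y_t vy) !orbT.
Qed.

Lemma connect_bag t : v \in bag D T t -> connect R v t.
Proof.
rewrite in_bag => /or4P [/eqP ->|Tvt|/connect_bag_HeadBack //|v_global].
- exact: connect0.
- by apply: connect1; rewrite /= /undirected !in_bag eqxx Tvt !orbT.
- exact: connect_bag_global.
Qed.

End BagsContaining.

Lemma bag_tree_decomposition : one_optimal D T -> tree_decomposition D T (bag D T).
Proof.
move=> opt; split.
- by move=> v; exists v; rewrite in_bag eqxx.
- by move=> a b; apply: bag_cover_arc.
- move=> v s t v_s v_t; apply: connect_trans (connect_bag v_t).
  by rewrite (sym_connect_sym (symmetric_bag_rel v)); apply: connect_bag.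
Qed.

Lemma td_width_bag h :
  (forall z, #|HeadBack D T z| <= h) -> td_width (bag D T) <= h + 3 * #|Leaf T| - 1.
Proof.
move=> HB; rewrite /td_width; suff : \max_t #|bag D T t| <= h + 3 * #|Leaf T| by lia.
apply/bigmax_leqP => t _; apply: leq_trans (card_bag t) _.
by rewrite leq_add2r.
Qed.

End Branching.

Theorem proposition9 (V : finType) (D T : rel V) (k : nat) :
  0 < k ->
  out_branching D T ->
  one_optimal D T ->
  #|Leaf T| <= k - 1 ->
  (forall z : V, #|HeadBack D T z| <= 3 * k - 1) ->
  exists X : V -> {set V}, tree_decomposition D T X /\ td_width X <= 6 * k - 5.
Proof.
move=> _ [r Tr] opt leaves HB; exists (bag D T); split.
  exact: bag_tree_decomposition Tr opt.
by apply: leq_trans (td_width_bag Tr HB) _; lia.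
Qed.
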